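(* For all $n\ge1$, $p_n(1221,1232)=p_n(1221,1223)=1+(n-1)2^{n-2}$.
   Context: Set partitions of $[n]$ are written in canonical sequential form (restricted growth words $\pi_1\cdots\pi_n$ with $\pi_1=1$, $\pi_{i+1}\le\max(\pi_1,\dots,\pi_i)+1$). A partition contains a pattern if it has a subsequence order-isomorphic to it; $p_n(T)$ counts partitions of $[n]$ avoiding every pattern in $T$. *)

From mathcomp Require Import all_boot.
Set Implicit Arguments. Unset Strict Implicit. Unset Printing Implicit Defensive.

(* Set partitions of [n] in canonical sequential form: restricted growth words
   pi_1 ... pi_n over positive integers with pi_1 = 1 and
   pi_(i+1) <= max(pi_1,...,pi_i) + 1. *)
Fixpoint rgf_from (m : nat) (s : seq nat) : bool :=
  match s with
  | [::] => true
  | x :: s' => (0 < x) && (x <= m.+1) && rgf_from (maxn m x) s'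
  end.

(* rgf_from 0 forces the first letter to be 1 (since 0 < x <= 1). *)
Definition is_rgf (s : seq nat) : bool := rgf_from 0 s.

Definition order_iso (s t : seq nat) : bool :=
  (size s == size t) &&
  [forall i : 'I_(size s), forall j : 'I_(size s),
     ((nth 0 s i < nth 0 s j) == (nth 0 t i < nth 0 t j)) &&
     ((nth 0 s i == nth 0 s j) == (nth 0 t i == nth 0 t j))].

Definition contains (w p : seq nat) : bool :=
  [exists m : (size w).-tuple bool, order_iso (mask m w) p].

Definition avoids_all (T : seq (seq nat)) (w : seq nat) : bool :=
  all (fun p => ~~ contains w p) T.

(* p_n(T): the number of set partitions of [n] avoiding every pattern in T.
   Letters of a partition of [n] lie in {1,...,n}, so words are enumerated as
   n-tuples over 'I_(n.+1). *)
Definition pn (n : nat) (T : seq (seq nat)) : nat :=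
  #|[set w : n.-tuple 'I_n.+1 |
       is_rgf (map val w) && avoids_all T (map val w)]|.

From mathcomp Require Import all_boot zify.
Set Implicit Arguments. Unset Strict Implicit. Unset Printing Implicit Defensive.

(* Both classes of restricted growth words are recognised by a left-to-right
   automaton whose state is a small summary of the word read so far; the
   number of accepted words then obeys a linear recurrence with a closed form.

   In both cases twice the number of words of length n is 2 + (n-1) 2^(n-1). *)

Fixpoint words (K k : nat) : seq (seq nat) :=
  if k is k'.+1 then [seq x :: w | x <- iota 0 K.+1, w <- words K k'] else [:: [::]].

Lemma wordsS K k : words K k.+1 = [seq x :: w | x <- iota 0 K.+1, w <- words K k].
Proof. by []. Qed.

Lemma mem_words K k s : (s \in words K k) = (size s == k) && all (fun x => x < K.+1) s.
Proof.
elim: k s => [|k IH] s; first by case: s.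
rewrite wordsS; apply/allpairsP/idP => [[[x v] [x_in v_in ->]]|].
  by move: x_in v_in; rewrite mem_iota IH /= eqSS => -> ->.
case: s => // x s /andP[size_s /andP[x_le all_s]].
exists (x, s); split => //; first by rewrite mem_iota.
by rewrite IH; apply/andP.
Qed.

Lemma uniq_words K k : uniq (words K k).
Proof.
elim: k => // k IH; rewrite wordsS; apply: allpairs_uniq => //; first exact: iota_uniq.
by move=> [x1 w1] [x2 w2] _ _ [-> ->].
Qed.

Lemma card_tuples_words K k (P : pred (seq nat)) :
  #|[set w : k.-tuple 'I_K.+1 | P (map val w)]| = count P (words K k).
Proof.
pose f (w : k.-tuple 'I_K.+1) := map val w.
have f_inj : injective f by move=> w1 w2 /(inj_map val_inj)/val_inj.
have perm_words : perm_eq (map f (enum {: k.-tuple 'I_K.+1})) (words K k).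
  apply: uniq_perm; [by rewrite map_inj_uniq ?enum_uniq | exact: uniq_words |].
  move=> s; rewrite mem_words; apply/mapP/idP => [[w _ ->] /=|/andP[/eqP size_s all_s]].
    by rewrite size_map size_tuple eqxx; apply/allP => _ /mapP[y _ ->]; exact: ltn_ord.
  have size_inord : size (map (@inord K) s) == k by rewrite size_map size_s.
  exists (Tuple size_inord); first by rewrite mem_enum.
  rewrite /f /= -map_comp -[LHS]map_id; apply/eq_in_map => y /(allP all_s) y_le /=.
  by rewrite inordK.
by rewrite -(permP perm_words) count_map cardsE cardE -size_filter /enum_mem filter_predT.
Qed.

Section Automaton.

Variables (S : Type) (step : S -> nat -> option S).

Fixpoint run (st : S) (w : seq nat) : option S :=
  if w is x :: w' then (if step st x is Some st' then run st' w' else None) else Some st.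

Lemma run_rcons st w x :
  run st (rcons w x) = if run st w is Some st' then step st' x else None.
Proof.
elim: w st => [|y w IH] st /=; first by case: (step st x).
by case: (step st y).
Qed.

Fixpoint accepted (K k : nat) (st : S) : nat :=
  if k is k'.+1 then
    sumn [seq (if step st x is Some st' then accepted K k' st' else 0) | x <- iota 0 K.+1]
  else 1.

Lemma acceptedS K k st : accepted K k.+1 st =
  sumn [seq (if step st x is Some st' then accepted K k st' else 0) | x <- iota 0 K.+1].
Proof. by []. Qed.

Lemma count_accepted K k st :
  count (fun w => isSome (run st w)) (words K k) = accepted K k st.
Proof.
elim: k st => // k IH st; rewrite wordsS count_flatten -map_comp acceptedS.
congr sumn; apply: eq_map => x /=; rewrite count_map.
case E: (step st x) => [st'|].
  by rewrite -IH; apply: eq_count => w /=; rewrite E.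
by rewrite -(count_pred0 (words K k)); apply: eq_count => w /=; rewrite E.
Qed.

Variables (init : S) (Inv : S -> seq nat -> Prop) (Good : seq nat -> Prop).
Hypothesis Inv_nil : Inv init [::].
Hypothesis Good_nil : Good [::].
Hypothesis Good_prefix : forall w x, Good (rcons w x) -> Good w.
Hypothesis step_good : forall st w x, Inv st w -> Good w ->
  Good (rcons w x) <-> isSome (step st x).
Hypothesis step_inv : forall st st' w x, Inv st w -> Good w ->
  step st x = Some st' -> Inv st' (rcons w x).

Lemma run_correct w : Good w <-> isSome (run init w).
Proof.
suff [run_some run_none] : (forall st, run init w = Some st -> Inv st w /\ Good w) /\
    (run init w = None -> ~ Good w).
  by case E: (run init w) => [st|]; [have [] := run_some st E | have := run_none E].
elim/last_ind: w => [|w x [run_some run_none]]; first by split=> // st [<-].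
rewrite run_rcons; case E: (run init w) => [st|]; last first.
  by split=> // _ /Good_prefix; apply: run_none.
have [inv_w good_w] := run_some st E.
have good_wx := step_good x inv_w good_w.
split=> [st' step_x|step_x]; last by rewrite good_wx step_x.
by split; [apply: step_inv step_x | rewrite good_wx step_x].
Qed.

End Automaton.

Lemma pn_accepted (S : Type) (step : S -> nat -> option S) init n T :
  (forall w, is_rgf w && avoids_all T w = isSome (run step init w)) ->
  pn n T = accepted step n n init.
Proof.
move=> decides; rewrite /pn (card_tuples_words n n (fun s => is_rgf s && avoids_all T s)).
by rewrite (eq_count decides) count_accepted.
Qed.

Lemma sumn_add (f g : nat -> nat) r :
  sumn [seq f x + g x | x <- r] = sumn [seq f x | x <- r] + sumn [seq g x | x <- r].
Proof. by elim: r => //= x r ->; rewrite addnACA. Qed.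

Lemma sumn_iota_pick c v K : sumn [seq (x == c) * v | x <- iota 0 K.+1] = (c <= K) * v.
Proof.
have <- : count (pred1 c) (iota 0 K.+1) = (c <= K).
  by rewrite count_uniq_mem ?iota_uniq // mem_iota.
by elim: (iota 0 K.+1) => //= x r ->; rewrite mulnDl eq_sym.
Qed.

Lemma order_iso_nth s t : order_iso s t -> forall i j, i < size s -> j < size s ->
  (nth 0 s i < nth 0 s j) = (nth 0 t i < nth 0 t j) /\
  (nth 0 s i == nth 0 s j) = (nth 0 t i == nth 0 t j).
Proof.
move=> /andP[_ /forallP iso] i j i_lt j_lt.
by have /forallP/(_ (Ordinal j_lt))/andP[/eqP-> /eqP->] := iso (Ordinal i_lt).
Qed.

Lemma eqn_ltn (x y : nat) : (x == y) = ~~ (x < y) && ~~ (y < x).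
Proof. by rewrite -!leqNgt -eqn_leq. Qed.

Lemma order_iso_map (f : nat -> nat) t :
  {in t &, {mono f : x y / x < y}} -> order_iso (map f t) t.
Proof.
move=> f_mono; rewrite /order_iso size_map eqxx /=.
apply/forallP => i; apply/forallP => j; rewrite !(nth_map 0) //.
have [ti tj] : nth 0 t i \in t /\ nth 0 t j \in t by split; apply: mem_nth.
by rewrite !eqn_ltn !f_mono // !eqxx.
Qed.

Lemma containsP w p : reflect (exists2 s, subseq s w & order_iso s p) (contains w p).
Proof.
apply: (iffP existsP) => [[m iso]|[s /subseqP[m size_m ->] iso]].
  by exists (mask m w); first exact: mask_subseq.
have size_m' : size m == size w by rewrite size_m.
by exists (Tuple size_m').
Qed.

Definition occ1221 (w : seq nat) : Prop :=
  exists a b, a < b /\ subseq [:: a; b; b; a] w.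
Definition occ1232 (w : seq nat) : Prop :=
  exists a b c, a < b < c /\ subseq [:: a; b; c; b] w.
Definition occ1223 (w : seq nat) : Prop :=
  exists a b c, a < b < c /\ subseq [:: a; b; b; c] w.

Lemma occ1221P w : reflect (occ1221 w) (contains w [:: 1; 2; 2; 1]).
Proof.
apply: (iffP (containsP _ _)) => [[[|a [|b [|c [|d []]]]] sub iso] //|[a [b [ab sub]]]].
- have [ab _] := order_iso_nth (i := 0) (j := 1) iso isT isT.
  have [_ /eqP bc] := order_iso_nth (i := 1) (j := 2) iso isT isT.
  have [_ /eqP da] := order_iso_nth (i := 3) (j := 0) iso isT isT.
  by move: ab bc da sub => /= ab <- -> sub; exists a, b.
- exists [:: a; b; b; a] => //.
  rewrite -[[:: a; b; b; a]]/(map (nth 0 [:: 0; a; b]) [:: 1; 2; 2; 1]).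
  apply: order_iso_map => x y; rewrite !inE.
  by move=> /or4P[]/eqP-> /or4P[]/eqP-> /=; lia.
Qed.

Lemma occ1232P w : reflect (occ1232 w) (contains w [:: 1; 2; 3; 2]).
Proof.
apply: (iffP (containsP _ _)) => [[[|a [|b [|c [|d []]]]] sub iso] //|[a [b [c [abc sub]]]]].
- have [ab _] := order_iso_nth (i := 0) (j := 1) iso isT isT.
  have [bc _] := order_iso_nth (i := 1) (j := 2) iso isT isT.
  have [_ /eqP db] := order_iso_nth (i := 3) (j := 1) iso isT isT.
  by move: ab bc db sub => /= ab bc -> sub; exists a, b, c; rewrite ab bc.
- exists [:: a; b; c; b] => //.
  rewrite -[[:: a; b; c; b]]/(map (nth 0 [:: 0; a; b; c]) [:: 1; 2; 3; 2]).
  apply: order_iso_map => x y; rewrite !inE.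
  by move=> /or4P[]/eqP-> /or4P[]/eqP-> /=; lia.
Qed.

Lemma occ1223P w : reflect (occ1223 w) (contains w [:: 1; 2; 2; 3]).
Proof.
apply: (iffP (containsP _ _)) => [[[|a [|b [|c [|d []]]]] sub iso] //|[a [b [c [abc sub]]]]].
- have [ab _] := order_iso_nth (i := 0) (j := 1) iso isT isT.
  have [_ /eqP bc] := order_iso_nth (i := 1) (j := 2) iso isT isT.
  have [cd _] := order_iso_nth (i := 2) (j := 3) iso isT isT.
  by move: ab bc cd sub => /= ab <- bd sub; exists a, b, d; rewrite ab bd.
- exists [:: a; b; b; c] => //.
  rewrite -[[:: a; b; b; c]]/(map (nth 0 [:: 0; a; b; c]) [:: 1; 2; 2; 3]).
  apply: order_iso_map => x y; rewrite !inE.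
  by move=> /or4P[]/eqP-> /or4P[]/eqP-> /=; lia.
Qed.

Lemma subseq_rcons2 (s w : seq nat) y x :
  subseq (rcons s y) (rcons w x) = subseq (rcons s y) w || (y == x) && subseq s w.
Proof.
rewrite -subseq_rev !rev_rcons /= -(subseq_rev (rcons s y)) rev_rcons -(subseq_rev s w).
case: eqP => [->|_] /=; last by rewrite orbF.
apply/idP/orP => [->|[|//]]; first by right.
exact/subseq_trans/subseq_cons.
Qed.

Lemma subseq_rcons_r (s w : seq nat) x : subseq s w -> subseq s (rcons w x).
Proof. by move/subseq_trans; apply; apply: subseq_rcons. Qed.

Lemma repeated_rcons (w : seq nat) (x c : nat) :
  subseq [:: c; c] (rcons w x) = subseq [:: c; c] w || (c == x) && (c \in w).
Proof. by rewrite -[[:: c; c]]/(rcons [:: c] c) subseq_rcons2 sub1seq. Qed.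

Lemma occ1221_rcons w x : occ1221 (rcons w x) <->
  occ1221 w \/ exists2 b, x < b & subseq [:: x; b; b] w.
Proof.
split=> [[a [b [ab]]]|[[a [b [ab sub]]]|[b xb sub]]].
- rewrite -[[:: a; b; b; a]]/(rcons [:: a; b; b] a) subseq_rcons2.
  case/orP=> [sub|/andP[/eqP ax sub]]; first by left; exists a, b.
  by right; exists b; rewrite -ax.
- by exists a, b; split=> //; apply: subseq_rcons_r.
- exists x, b; split=> //.
  by rewrite -[[:: x; b; b; x]]/(rcons [:: x; b; b] x) subseq_rcons2 eqxx sub orbT.
Qed.

Lemma occ1232_rcons w x : occ1232 (rcons w x) <->
  occ1232 w \/ exists a c, a < x < c /\ subseq [:: a; x; c] w.
Proof.
split=> [[a [b [c [abc]]]]|[[a [b [c [abc sub]]]]|[a [c [axc sub]]]]].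
- rewrite -[[:: a; b; c; b]]/(rcons [:: a; b; c] b) subseq_rcons2.
  case/orP=> [sub|/andP[/eqP bx sub]]; first by left; exists a, b, c.
  by right; exists a, c; rewrite -bx.
- by exists a, b, c; split=> //; apply: subseq_rcons_r.
- exists a, x, c; split=> //.
  by rewrite -[[:: a; x; c; x]]/(rcons [:: a; x; c] x) subseq_rcons2 eqxx sub orbT.
Qed.

Lemma occ1223_rcons w x : occ1223 (rcons w x) <->
  occ1223 w \/ exists a b, a < b < x /\ subseq [:: a; b; b] w.
Proof.
split=> [[a [b [c [abc]]]]|[[a [b [c [abc sub]]]]|[a [b [abx sub]]]]].
- rewrite -[[:: a; b; b; c]]/(rcons [:: a; b; b] c) subseq_rcons2.
  case/orP=> [sub|/andP[/eqP cx sub]]; first by left; exists a, b, c.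
  by right; exists a, b; rewrite -cx.
- by exists a, b, c; split=> //; apply: subseq_rcons_r.
- exists a, b, x; split=> //.
  by rewrite -[[:: a; b; b; x]]/(rcons [:: a; b; b] x) subseq_rcons2 eqxx sub orbT.
Qed.

Definition wmax (w : seq nat) : nat := foldl maxn 0 w.

Lemma wmax_rcons w x : wmax (rcons w x) = maxn (wmax w) x.
Proof. by rewrite /wmax foldl_rcons. Qed.

Lemma mem_wmax w y : y \in w -> y <= wmax w.
Proof.
elim/last_ind: w => // w x IH; rewrite mem_rcons inE wmax_rcons leq_max.
by case/orP=> [/eqP->|/IH->]; rewrite ?leqnn ?orbT.
Qed.

Lemma rgf_from_cat m u v :
  rgf_from m (u ++ v) = rgf_from m u && rgf_from (foldl maxn m u) v.
Proof. by elim: u m => //= x u IH m; rewrite IH !andbA. Qed.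

Lemma rgf_rcons w x : is_rgf (rcons w x) = is_rgf w && (0 < x <= (wmax w).+1).
Proof. by rewrite /is_rgf -cats1 rgf_from_cat /= andbT. Qed.

Lemma rgf_prefix u v : is_rgf (u ++ v) -> is_rgf u.
Proof. by rewrite /is_rgf rgf_from_cat => /andP[]. Qed.

Lemma rgf_pos w y : is_rgf w -> y \in w -> 0 < y.
Proof.
elim/last_ind: w => // w x IH; rewrite rgf_rcons mem_rcons inE.
by case/andP=> rgf_w /andP[x_pos _] /orP[/eqP->|/(IH rgf_w)].
Qed.

Lemma rgf_mem w y : is_rgf w -> 0 < y <= wmax w -> y \in w.
Proof.
elim/last_ind: w => [|w x IH]; first by rewrite /wmax /=; lia.
rewrite rgf_rcons wmax_rcons mem_rcons inE => /andP[rgf_w x_le] y_le.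
have [y_w|y_gt] := leqP y (wmax w); first by rewrite IH ?orbT //; lia.
by apply/orP; left; apply/eqP; lia.
Qed.

Lemma subseq_cons_cat (x : nat) s w : subseq (x :: s) w ->
  exists u v, w = u ++ x :: v /\ subseq s v.
Proof.
elim: w => // y w IH /=; case: eqP => [<- sub|_ /IH [u [v [-> sub]]]].
  by exists [::], w.
by exists (y :: u), v.
Qed.

(* In a restricted growth word every positive letter smaller than b occurs
   before the first b; hence it can be prepended to a subsequence starting
   with b. *)
Lemma rgf_before w x b s : is_rgf w -> 0 < x < b -> subseq (b :: s) w ->
  subseq [:: x, b & s] w.
Proof.
move=> rgf_w x_b /subseq_cons_cat [u [v [w_eq sub]]].
have : is_rgf (rcons u b) by apply: (@rgf_prefix _ v); rewrite cat_rcons -w_eq.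
rewrite rgf_rcons => /andP[rgf_u b_le].
have x_u : x \in u by apply: rgf_mem; lia.
by rewrite w_eq -cat1s; apply: cat_subseq; rewrite ?sub1seq //= eqxx.
Qed.

Lemma rgf_middle w x : is_rgf w ->
  (exists a c, a < x < c /\ subseq [:: a; x; c] w) <-> 1 < x < wmax w.
Proof.
move=> rgf_w; split=> [[a [c [axc sub]]]|x_mid].
  have a_w : a \in w by apply: (mem_subseq sub); rewrite inE eqxx.
  have c_w : c \in w by apply: (mem_subseq sub); rewrite !inE eqxx !orbT.
  by have := rgf_pos rgf_w a_w; have := mem_wmax c_w; lia.
exists 1, x.+1; split; first lia.
apply: rgf_before => //; first lia.
by apply: rgf_before; rewrite ?sub1seq //; [lia | apply: rgf_mem => //; lia].
Qed.

Definition repeats (w : seq nat) : Prop := exists2 b, 1 < b & subseq [:: b; b] w.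

Lemma repeats_rcons w x :
  repeats (rcons w x) <-> repeats w \/ (1 < x /\ x \in w).
Proof.
split=> [[b b_gt]|[[b b_gt sub]|[x_gt x_w]]].
- by rewrite repeated_rcons => /orP[sub|/andP[/eqP <- b_w]]; [left; exists b | right].
- by exists b; rewrite // repeated_rcons sub.
- by exists x; rewrite // repeated_rcons eqxx x_w orbT.
Qed.

Definition T1 : seq (seq nat) := [:: [:: 1; 2; 2; 1]; [:: 1; 2; 3; 2]].

Definition Good1 (w : seq nat) : Prop := [/\ is_rgf w, ~ occ1221 w & ~ occ1232 w].

Lemma good1P w : reflect (Good1 w) (is_rgf w && avoids_all T1 w).
Proof.
rewrite /avoids_all /= andbT.
apply: (iffP and3P) => -[rgf_w no1221 no1232]; split=> //.
- by move/occ1221P; apply/negP.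
- by move/occ1232P; apply/negP.
- by apply/occ1221P.
- by apply/occ1232P.
Qed.

Lemma good1_rcons w x : Good1 w -> Good1 (rcons w x) <->
  [/\ 0 < x <= (wmax w).+1, ~ (exists2 b, x < b & subseq [:: x; b; b] w)
    & ~ (1 < x < wmax w)].
Proof.
move=> [rgf_w no1221 no1232]; rewrite /Good1 rgf_rcons rgf_w /=.
have := occ1221_rcons w x; have := occ1232_rcons w x; have := rgf_middle x rgf_w.
by split=> -[x_ok new1221 new1232]; split; tauto.
Qed.

Definition step1 (st : nat * bool) (x : nat) : option (nat * bool) :=
  let: (m, rep) := st in
  if x == m.+1 then Some (m.+1, rep)
  else if (x == m) && (2 <= m) then Some (m, true)
  else if (x == 1) && ~~ rep then Some (m, rep) else None.

Definition Inv1 (st : nat * bool) (w : seq nat) : Prop :=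
  let: (m, rep) := st in m = wmax w /\ (rep <-> repeats w).

Lemma no_larger_repeat w x : wmax w <= x -> ~ exists2 b, x < b & subseq [:: x; b; b] w.
Proof.
move=> max_le [b x_b sub].
have b_w : b \in w by apply: (mem_subseq sub); rewrite !inE eqxx !orbT.
by have := mem_wmax b_w; lia.
Qed.

(* A letter is accepted by the automaton iff it keeps the word in the class:
   for x = 1 a 1221 ends at x iff some letter >= 2 is repeated, and for
   x >= m no 1221 ends at x. *)
Lemma good1_step st w x : Inv1 st w -> Good1 w ->
  Good1 (rcons w x) <-> isSome (step1 st x).
Proof.
case: st => m rep [m_eq rep_eq] good_w; have [rgf_w _ _] := good_w.
rewrite good1_rcons // -m_eq.
have -> : isSome (step1 (m, rep) x) = [|| x == m.+1, (x == m) && (2 <= m) | (x == 1) && ~~ rep].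
  by rewrite /step1; do 3 case: ifP => ? //=; lia.
have one_repeats : (exists2 b, 1 < b & subseq [:: 1; b; b] w) <-> rep.
  rewrite rep_eq; split=> [[b b_gt /cons_subseq sub]|[b b_gt sub]]; exists b => //.
  exact: rgf_before.
split=> [[x_le new1221 not_mid]|accept].
  have [x1|x_ne1] := eqVneq x 1; last by lia.
  suff : ~~ rep by rewrite x1 => ->; rewrite !orbT.
  by apply/negP => /one_repeats; rewrite -x1.
split; [lia | | lia].
have [m_le|x_lt] := leqP m x; first by rewrite m_eq in m_le; apply: no_larger_repeat.
have [x1 not_rep] : x = 1 /\ ~~ rep by lia.
by rewrite x1 one_repeats; apply/negP.
Qed.

Lemma inv1_step st st' w x : Inv1 st w -> Good1 w -> step1 st x = Some st' ->
  Inv1 st' (rcons w x).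
Proof.
case: st => m rep [m_eq rep_eq] [rgf_w _ _]; rewrite /step1 /Inv1 wmax_rcons -m_eq.
case: ifP => [/eqP-> [<-]|x_new].
  split; first lia.
  rewrite repeats_rcons rep_eq; suff : m.+1 \notin w by move/negP; tauto.
  by apply/negP => /mem_wmax; lia.
case: ifP => [/andP[/eqP-> m2] [<-]|_].
  split; first lia.
  by split=> // _; apply/repeats_rcons; right; split=> //; apply: rgf_mem; lia.
case: ifP => // /andP[/eqP x1 _] [<-]; split; first lia.
by rewrite repeats_rcons rep_eq x1; split; [left | case=> // -[]].
Qed.

Lemma good1_nil : Good1 [::].
Proof. by split=> // [[a [b [_ //]]] | [a [b [c [_ //]]]]]. Qed.

Lemma good1_prefix w x : Good1 (rcons w x) -> Good1 w.
Proof.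
rewrite /Good1 rgf_rcons => -[/andP[rgf_w _] no1221 no1232]; split=> // occ.
- by apply: no1221; apply/occ1221_rcons; left.
- by apply: no1232; apply/occ1232_rcons; left.
Qed.

Lemma step1_decides w : is_rgf w && avoids_all T1 w = isSome (run step1 (0, false) w).
Proof.
have inv_nil : Inv1 (0, false) [::] by split=> //; split=> // -[b _ //].
have run_ok := run_correct inv_nil good1_nil good1_prefix good1_step inv1_step w.
by apply/good1P/idP => /run_ok.
Qed.

Lemma step1_indicators m rep x (f : nat * bool -> nat) :
  (if step1 (m, rep) x is Some st' then f st' else 0) =
  (x == m.+1) * f (m.+1, rep) + (x == m) * ((2 <= m) * f (m, true))
  + (x == 1) * ((~~ rep && (m != 0)) * f (m, rep)).
Proof.
rewrite /step1; case: ifP => [/eqP x_top|x_new]; first lia.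
case: ifP => [/andP[/eqP x_m m2]|not_top]; first lia.
by case: ifP => [/andP[/eqP x1 not_rep]|not_one]; lia.
Qed.

Lemma accepted1S K k m rep : accepted step1 K k.+1 (m, rep) =
  (m.+1 <= K) * accepted step1 K k (m.+1, rep)
  + (m <= K) * ((2 <= m) * accepted step1 K k (m, true))
  + (1 <= K) * ((~~ rep && (m != 0)) * accepted step1 K k (m, rep)).
Proof.
rewrite acceptedS (eq_map (fun x => step1_indicators m rep x _)).
by rewrite !sumn_add !sumn_iota_pick.
Qed.

(* Once a letter >= 2 is repeated, each step offers the letters m+1 and m. *)
Lemma accepted1_repeated K k m : 2 <= m -> m + k <= K -> accepted step1 K k (m, true) = 2 ^ k.
Proof.
elim: k m => // k IH m m2 le_K; rewrite accepted1S !IH //; try lia.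
rewrite expnS; lia.
Qed.

(* From a maximum m >= 2 without repetition, one more letter 1 may still be
   inserted before the first repetition. *)
Lemma accepted1_fresh K k m : 2 <= m -> m + k <= K ->
  accepted step1 K k (m, false) * 2 = 2 ^ k * (k + 2).
Proof.
elim: k m => // k IH m m2 le_K.
rewrite accepted1S accepted1_repeated //; try lia.
have := IH m m2 ltac:(lia); have := IH m.+1 ltac:(lia) ltac:(lia).
rewrite expnS; nia.
Qed.

(* After the initial letter 1 the maximum is 1 and only 1 and 2 may follow. *)
Lemma accepted1_one K k : k < K -> accepted step1 K k (1, false) * 2 = 2 + k * 2 ^ k.
Proof.
elim: k => // k IH lt_K; rewrite accepted1S.
have := IH ltac:(lia); have := accepted1_fresh (K := K) (k := k) (m := 2) isT ltac:(lia).
rewrite expnS; nia.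
Qed.

(* Every word of the class starts with 1. *)
Lemma pn1_double k : pn k.+1 T1 * 2 = 2 + k * 2 ^ k.
Proof.
rewrite (pn_accepted k.+1 step1_decides) accepted1S /= !mul0n !addn0 mul1n.
exact: accepted1_one.
Qed.

Definition T2 : seq (seq nat) := [:: [:: 1; 2; 2; 1]; [:: 1; 2; 2; 3]].

Definition Good2 (w : seq nat) : Prop := [/\ is_rgf w, ~ occ1221 w & ~ occ1223 w].

Lemma good2P w : reflect (Good2 w) (is_rgf w && avoids_all T2 w).
Proof.
rewrite /avoids_all /= andbT.
apply: (iffP and3P) => -[rgf_w no1221 no1223]; split=> //.
- by move/occ1221P; apply/negP.
- by move/occ1223P; apply/negP.
- by apply/occ1221P.
- by apply/occ1223P.
Qed.

(* Appending a positive letter x to a restricted growth word creates an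
   occurrence of 1221 or 1223 exactly when some letter c >= 2 other than x
   is repeated: x < c gives x c c x, and c < x gives 1 c c x. *)
Lemma rgf_new_occ2 w x : is_rgf w -> 0 < x ->
  (exists2 b, x < b & subseq [:: x; b; b] w) \/ (exists a b, a < b < x /\ subseq [:: a; b; b] w)
  <-> exists2 c, 1 < c & (c != x) && subseq [:: c; c] w.
Proof.
move=> rgf_w x_pos; split=> [[[b x_b sub]|[a [b [abx sub]]]]|[c c_gt /andP[c_x sub]]].
- by exists b; rewrite ?(cons_subseq sub) ?andbT; lia.
- have := rgf_pos rgf_w (mem_subseq sub (mem_head _ _)).
  by exists b; rewrite ?(cons_subseq sub) ?andbT; lia.
- have [x_c|c_lt] := ltnP x c.
    by left; exists c => //; apply: rgf_before; rewrite ?x_pos.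
  by right; exists 1, c; split; [lia | apply: rgf_before => //; lia].
Qed.

Lemma good2_rcons w x : Good2 w -> Good2 (rcons w x) <->
  0 < x <= (wmax w).+1 /\ ~ exists2 c, 1 < c & (c != x) && subseq [:: c; c] w.
Proof.
move=> [rgf_w no1221 no1223]; rewrite /Good2 rgf_rcons rgf_w /=.
have := occ1221_rcons w x; have := occ1223_rcons w x.
split=> [[x_ok new1221 new1223]|[x_ok no_repeat]];
  have := rgf_new_occ2 rgf_w (proj1 (andP x_ok)); split; tauto.
Qed.

(* The automaton for {1221, 1223}: the state is the current maximum m and the
   repeated letter b >= 2, or b = 0 while there is none. *)
Definition step2 (st : nat * nat) (x : nat) : option (nat * nat) :=
  let: (m, b) := st in
  if b == 0 then
    (if x == m.+1 then Some (m.+1, 0)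
     else if x == 1 then Some (m, 0)
     else if (2 <= x) && (x <= m) then Some (m, x) else None)
  else if x == b then Some (m, b) else None.

Definition Inv2 (st : nat * nat) (w : seq nat) : Prop :=
  let: (m, b) := st in
  [/\ m = wmax w, b != 1 & forall c, 1 < c -> subseq [:: c; c] w = (c == b)].

Lemma good2_step st w x : Inv2 st w -> Good2 w ->
  Good2 (rcons w x) <-> isSome (step2 st x).
Proof.
case: st => m b [m_eq b_ne1 repeat_b] good_w; have [rgf_w _ _] := good_w.
rewrite good2_rcons // -m_eq.
have -> : isSome (step2 (m, b) x) = if b == 0 then 0 < x <= m.+1 else x == b.
  rewrite /step2; case: eqP => _; last by case: ifP.
  case: ifP => [/eqP->|x_new]; first by rewrite /= ltnSn.
  case: ifP => [/eqP->|x_ne1]; first by [].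
  by case: ifP => x_mid /=; lia.
have other_repeat : (exists2 c, 1 < c & (c != x) && subseq [:: c; c] w) <-> (b != 0) && (b != x).
  split=> [[c c_gt]|/andP[b_n0 b_x]]; first by rewrite repeat_b // => /andP[c_x /eqP c_b]; lia.
  by exists b; [lia | rewrite repeat_b ?eqxx ?b_x //; lia].
have b_le : b != 0 -> b <= m.
  move=> b_n0; rewrite m_eq; apply: mem_wmax; apply: (mem_subseq (s1 := [:: b; b])).
    by rewrite repeat_b ?eqxx //; lia.
  exact: mem_head.
case: eqP => [b0|/eqP b_n0]; rewrite other_repeat.
  by rewrite b0; split=> [[]|].
by have := b_le b_n0; split=> [[x_ok no_repeat]|x_b]; lia.
Qed.

Lemma inv2_step st st' w x : Inv2 st w -> Good2 w -> step2 st x = Some st' ->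
  Inv2 st' (rcons w x).
Proof.
case: st => m b [m_eq b_ne1 repeat_b] [rgf_w _ _]; rewrite /step2 /Inv2 wmax_rcons -m_eq.
have repeat_rcons c : 1 < c -> subseq [:: c; c] (rcons w x) = (c == b) || (c == x) && (c \in w).
  by move=> c_gt; rewrite repeated_rcons repeat_b.
case: eqP => [b0|/eqP b_n0]; last first.
  case: ifP => // /eqP x_b [<-].
  have b_w : b \in w.
    by apply: (mem_subseq (s1 := [:: b; b])); rewrite ?repeat_b ?eqxx ?mem_head //; lia.
  split=> // [|c c_gt]; first by have := mem_wmax b_w; lia.
  by rewrite repeat_rcons // x_b; case: (c == b).
case: ifP => [/eqP x_top [<-]|x_new].
  have x_fresh : x \notin w by apply/negP => /mem_wmax; lia.
  split=> // [|c c_gt]; first lia.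
  rewrite repeat_rcons // b0 (gtn_eqF (ltnW c_gt)) /=.
  by case: (eqVneq c x) => [->|]; rewrite ?(negbTE x_fresh) ?andbF.
case: ifP => [/eqP x1 [<-]|x_ne1].
  split=> // [|c c_gt]; first lia.
  by rewrite repeat_rcons // b0 x1 (gtn_eqF (ltnW c_gt)) (gtn_eqF c_gt).
case: ifP => // /andP[x2 x_le] [<-].
split; [lia | lia | move=> c c_gt].
rewrite repeat_rcons // b0 (gtn_eqF (ltnW c_gt)) /=.
by case: (eqVneq c x) => [->|] //=; rewrite rgf_mem //; lia.
Qed.

Lemma good2_nil : Good2 [::].
Proof. by split=> // [[a [b [_ //]]] | [a [b [c [_ //]]]]]. Qed.

Lemma good2_prefix w x : Good2 (rcons w x) -> Good2 w.
Proof.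
rewrite /Good2 rgf_rcons => -[/andP[rgf_w _] no1221 no1223]; split=> // occ.
- by apply: no1221; apply/occ1221_rcons; left.
- by apply: no1223; apply/occ1223_rcons; left.
Qed.

Lemma step2_decides w : is_rgf w && avoids_all T2 w = isSome (run step2 (0, 0) w).
Proof.
have inv_nil : Inv2 (0, 0) [::] by split=> // c c_gt; rewrite (gtn_eqF (ltnW c_gt)).
have run_ok := run_correct inv_nil good2_nil good2_prefix good2_step inv2_step w.
by apply/good2P/idP => /run_ok.
Qed.

Lemma step2_indicators m x (f : nat * nat -> nat) :
  (if step2 (m, 0) x is Some st' then f st' else 0) =
  (x == m.+1) * f (m.+1, 0) + (x == 1) * ((m != 0) * f (m, 0))
  + ((1 < x) && (x <= m)) * f (m, x).
Proof.
rewrite /step2 /=; case: ifP => [/eqP x_top|x_new]; first lia.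
case: ifP => [/eqP x1|x_ne1]; first lia.
by case: ifP => [/andP[x_gt x_le]|x_out]; lia.
Qed.

(* Once b is repeated, the only accepted continuation is b, b, b, ... *)
Lemma accepted2_repeated K k m b : b != 0 -> b <= K -> accepted step2 K k (m, b) = 1.
Proof.
move=> b_n0 b_le; elim: k => // k IH; rewrite acceptedS.
rewrite (eq_map (_ : _ =1 fun x => (x == b) * 1)) ?sumn_iota_pick ?b_le //.
by move=> x; rewrite /step2 (negbTE b_n0); case: eqP; rewrite ?IH.
Qed.

Lemma count_iota_between m n :
  count (fun x => (1 < x) && (x <= m)) (iota 0 n) = minn n m.+1 - 2.
Proof.
elim: n => // n IH; rewrite -[n.+1]addn1 iotaD count_cat IH /=.
by case: (leqP 2 n) => n2; case: (leqP n m) => nm /=; lia.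
Qed.

Lemma accepted2S K k m : m <= K -> accepted step2 K k.+1 (m, 0) =
  (m.+1 <= K) * accepted step2 K k (m.+1, 0)
  + (1 <= K) * ((m != 0) * accepted step2 K k (m, 0)) + m.-1.
Proof.
move=> m_le; rewrite acceptedS; transitivity (sumn [seq
    (x == m.+1) * accepted step2 K k (m.+1, 0)
    + (x == 1) * ((m != 0) * accepted step2 K k (m, 0)) + ((1 < x) && (x <= m))
    | x <- iota 0 K.+1]).
  congr sumn; apply/eq_in_map => x; rewrite mem_iota step2_indicators => /andP[_ x_lt].
  case: andP => [[x_gt _]|_]; last by rewrite !mul0n.
  by rewrite [accepted _ _ _ (m, x)]accepted2_repeated //; lia.
by rewrite !sumn_add !sumn_iota_pick sumn_count count_iota_between; congr (_ + _); lia.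
Qed.

Lemma accepted2_fresh K k m : m.+1 + k <= K ->
  accepted step2 K k (m.+1, 0) * 2 + 2 * m = 2 + k * 2 ^ k + m * 2 ^ k.+1.
Proof.
elim: k m => [|k IH] m le_K; first by rewrite /=; lia.
rewrite accepted2S; last lia.
have := IH m ltac:(lia); have := IH m.+1 ltac:(lia).
rewrite !expnS; nia.
Qed.

(* Every word of the class starts with 1. *)
Lemma pn2_double k : pn k.+1 T2 * 2 = 2 + k * 2 ^ k.
Proof.
rewrite (pn_accepted k.+1 step2_decides) accepted2S // /= !mul0n !addn0 mul1n.
by have := accepted2_fresh (K := k.+1) (k := k) (m := 0) (leqnn _); lia.
Qed.

Lemma half_count k X : X * 2 = 2 + k * 2 ^ k -> X = 1 + k * 2 ^ k.-1.
Proof. by case: k => [|k]; rewrite ?expnS /=; lia. Qed.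

Theorem proposition4p12 (n : nat) : 1 <= n ->
  pn n [:: [:: 1; 2; 2; 1]; [:: 1; 2; 3; 2]] = 1 + (n - 1) * 2 ^ (n - 2) /\
  pn n [:: [:: 1; 2; 2; 1]; [:: 1; 2; 2; 3]] = 1 + (n - 1) * 2 ^ (n - 2).
Proof.
case: n => // k _; rewrite !subSS subn0 subn1.
by split; apply: half_count; [exact: pn1_double | exact: pn2_double].
Qed.
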